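(* Let $g\ge1$ and let $Q$ be the $g\times g$ matrix with $Q_{ii}=2$, $Q_{ij}=1$ ($i\neq j$). For two vertices $\mathbf a,\mathbf a'$ of the Voronoi polytope $V_Q$, we have $\mathbf a\sim\mathbf a'$ if and only if there exists $k\in\{1,\dots,g\}$ with $\mathbf a,\mathbf a'\in[\mathbf k]$.
   Context: $V_Q=\{\mathbf a\in\mathbb R^g:\ \mathbf a^TQ\mathbf a\le(\mathbf a-\mathbf c)^TQ(\mathbf a-\mathbf c)\ \forall\mathbf c\in\mathbb Z^g\}$ (Voronoi polytope of the genus-$g$ banana graph). For a vertex $\mathbf a$, $\mathcal D_{\mathbf a,Q}=\{\mathbf c\in\mathbb Z^g:\ \mathbf a^TQ\mathbf a=(\mathbf a-\mathbf c)^TQ(\mathbf a-\mathbf c)\}$. Vertices satisfy $\mathbf a\sim\mathbf a'$ iff $\mathbf a'=\mathbf a-\mathbf c_0$ for some $\mathbf c_0\in\mathcal D_{\mathbf a,Q}$. For $k=1,\dots,g$, $[\mathbf k]$ is the set of vectors in $\mathbb R^g$ with all entries in $\{-\tfrac{k}{g+1},\tfrac{g+1-k}{g+1}\}$ and with either $k$ or $k-1$ entries equal to $\tfrac{g+1-k}{g+1}$; the vertex set of $V_Q$ is $\bigcup_{k=1}^g[\mathbf k]$. *)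

From HB Require Import structures.
From mathcomp Require Import all_boot all_order all_algebra.
From mathcomp Require Import reals.
Set Implicit Arguments. Unset Strict Implicit. Unset Printing Implicit Defensive.
Import Order.TTheory GRing.Theory Num.Theory.
Local Open Scope ring_scope.

Section Banana.
Variable R : realType.

Definition Qbanana (g : nat) : 'M[R]_g :=
  \matrix_(i, j) (if i == j then 2 else 1).

Definition qform (g : nat) (Q : 'M[R]_g) (x : 'cV[R]_g) : R :=
  (x^T *m Q *m x) 0 0.

Definition intvec (g : nat) (c : 'cV[int]_g) : 'cV[R]_g :=
  map_mx (fun z : int => z%:~R) c.

Definition voronoi (g : nat) (Q : 'M[R]_g) (a : 'cV[R]_g) : Prop :=
  forall c : 'cV[int]_g, qform Q a <= qform Q (a - intvec c).

Definition is_vertex (g : nat) (Q : 'M[R]_g) (a : 'cV[R]_g) : Prop :=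
  voronoi Q a /\
  forall (x y : 'cV[R]_g) (t : R), voronoi Q x -> voronoi Q y ->
    0 < t < 1 -> a = t *: x + (1 - t) *: y -> x = y.

Definition in_D (g : nat) (Q : 'M[R]_g) (a : 'cV[R]_g) (c : 'cV[int]_g) : Prop :=
  qform Q a = qform Q (a - intvec c).

Definition vsim (g : nat) (Q : 'M[R]_g) (a a' : 'cV[R]_g) : Prop :=
  exists c0 : 'cV[int]_g, in_D Q a c0 /\ a' = a - intvec c0.

Definition bracket (g k : nat) (a : 'cV[R]_g) : Prop :=
  let hi : R := ((g + 1)%:R - k%:R) / (g + 1)%:R in
  let lo : R := - (k%:R / (g + 1)%:R) in
  (forall i : 'I_g, a i 0 = lo \/ a i 0 = hi) /\
  (#|[set i : 'I_g | a i 0 == hi]| = k \/ #|[set i : 'I_g | a i 0 == hi]| = k.-1).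

End Banana.

From HB Require Import structures.
From mathcomp Require Import all_boot all_order all_algebra.
From mathcomp Require Import reals.
From mathcomp Require Import ring lra zify.
Set Implicit Arguments. Unset Strict Implicit. Unset Printing Implicit Defensive.
Import Order.TTheory GRing.Theory Num.Theory.
Local Open Scope ring_scope.

(** Since Q = I + J, the form x^T Q x is the squared Euclidean norm of the
    zero-sum vector y = (x_1, ..., x_g, -(x_1 + ... + x_g)) of R^(g+1), and Z^g
    becomes the root lattice A_g of zero-sum integer vectors.  Hence V_Q is the
    Voronoi cell of A_g, cut out by the inequalities y_i - y_j <= 1.  At an
    extreme point every coordinate y_i has a partner with |y_i - y_j| = 1
    (otherwise y_i can be moved by +-d, compensated uniformly, inside the
    cell), so y takes exactly two values m and m - 1; the zero sum forces
    m = (g + 1 - k) / (g + 1), where k counts the coordinates equal to m, and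
    this is the class [k].  Vertices of classes k and k' can differ by an
    integer vector only if (k - k') / (g + 1) is an integer, i.e. k = k';
    conversely two vertices of one class differ by a vector in {0, 1, -1}^g,
    and two points of V_Q differing by a lattice vector have the same Q-norm. *)

Lemma voronoi_in_D (R : realType) g (Q : 'M[R]_g) a c :
  voronoi Q a -> voronoi Q (a - intvec R c) -> in_D Q a c.
Proof.
move=> vor_a vor_ac; apply/le_anti; rewrite vor_a /=.
have shift_back : a - intvec R c - intvec R (- c) = a.
  by apply/matrixP => i j; rewrite !mxE /= intrN opprK subrK.
by rewrite -{2}shift_back; exact: vor_ac.
Qed.

Lemma sqr_subz_ge0 (R : realFieldType) (w : R) (z : int) :
  -(1/2) <= w -> w <= 1/2 -> 0 <= z%:~R ^+ 2 - 2 * w * z%:~R.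
Proof.
move=> w_ge w_le.
have [z_ge1|[->|z_le1]] : (1 <= z)%R \/ z = 0 \/ (z <= -1)%R by lia.
- have : 1 <= z%:~R :> R by rewrite ler1z.
  by nra.
- by rewrite expr2 !mulr0 subr0.
- have : z%:~R <= -1 :> R by rewrite -(intrN _ 1) ler_int.
  by nra.
Qed.

Section RootLatticeA.
Variables (R : realFieldType) (n : nat).
Implicit Types (y u v : 'I_n -> R) (z : 'I_n -> int).

Definition voronoiA y := \sum_k y k = 0 /\ forall i j, y i - y j <= 1.

Definition extremeA y := forall u v (t : R), voronoiA u -> voronoiA v ->
  0 < t < 1 -> (forall k, y k = t * u k + (1 - t) * v k) -> forall k, u k = v k.

Lemma sum_sqr_subz y z :
  \sum_k (y k - (z k)%:~R) ^+ 2 =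
  \sum_k y k ^+ 2 + \sum_k ((z k)%:~R ^+ 2 - 2 * y k * (z k)%:~R).
Proof. by rewrite -big_split; apply: eq_bigr => k _ /=; ring. Qed.

Lemma nearest_voronoiA_spread y :
  (forall z, \sum_k z k = 0 -> \sum_k y k ^+ 2 <= \sum_k (y k - (z k)%:~R) ^+ 2) ->
  forall i j, y i - y j <= 1.
Proof.
move=> near i j; have [->|ij] := eqVneq i j; first by rewrite subrr ler01.
have ji : j != i by rewrite eq_sym.
pose z k : int := if k == i then 1 else if k == j then -1 else 0.
have sum_z : \sum_k z k = 0.
  rewrite (bigD1 i) // (bigD1 j) 1?eq_sym //= big1 => [|k /andP[ki kj]].
    by rewrite /z eqxx (negbTE ji) eqxx addr0 subrr.
  by rewrite /z (negbTE ki) (negbTE kj).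
have := near z sum_z; rewrite sum_sqr_subz lerDl (bigD1 i) // (bigD1 j) 1?eq_sym //=.
rewrite big1 => [|k /andP[/negbTE ki /negbTE kj]]; last by rewrite /z ki kj expr0n mulr0 subrr.
rewrite /z eqxx (negbTE ji) eqxx intrN addr0; lra.
Qed.

Lemma spread_voronoiA_nearest y : (forall i j, y i - y j <= 1) ->
  forall z, \sum_k z k = 0 -> \sum_k y k ^+ 2 <= \sum_k (y k - (z k)%:~R) ^+ 2.
Proof.
move=> spread z sum_z; have [p _|empty] := pickP (predT : pred 'I_n); last first.
  by rewrite !big_pred0.
case: (@arg_maxP _ R _ p predT y) => // q _ q_max.
(* As the z k sum to 0, recentring y at t leaves the cross term unchanged and
   puts every y k - t in [-1/2, 1/2]. *)
pose t := y q - 1/2.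
have shift : \sum_k ((z k)%:~R ^+ 2 - 2 * y k * (z k)%:~R) =
    \sum_k ((z k)%:~R ^+ 2 - 2 * (y k - t) * (z k)%:~R) - 2 * t * (\sum_k z k)%:~R.
  by rewrite rmorph_sum mulr_sumr -sumrB; apply: eq_bigr => k _; ring.
rewrite sum_sqr_subz lerDl shift sum_z mulr0 subr0.
apply: sumr_ge0 => k _; apply: sqr_subz_ge0.
  by have := spread q k; rewrite /t; lra.
by have /= := q_max k isT; rewrite /t; lra.
Qed.

Lemma voronoiA_dist y i j : voronoiA y -> `|y i - y j| <= 1.
Proof.
by case=> _ spread; rewrite ler_norml spread andbT lerNl opprB spread.
Qed.

Definition perturb y i (d : R) k := y k + (if k == i then d else 0) - d / n%:R.

Lemma voronoiA_perturb y i d : voronoiA y ->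
  (forall j, `|d| <= 1 - `|y i - y j|) -> voronoiA (perturb y i d).
Proof.
move=> [sum_y spread] d_small; split.
  have n_gt0 : (0 < n)%N by have := ltn_ord i; lia.
  rewrite !big_split /= sumrN sum_y sumr_const card_ord.
  rewrite (bigD1 i) //= eqxx big1 => [|k /negbTE -> //].
  by rewrite add0r addr0 -[d / _ *+ _]mulr_natr divfK ?subrr // pnatr_eq0 -lt0n.
move=> a b; rewrite /perturb.
have d_le := ler_norm d; have Nd_le : - d <= `|d| by rewrite -normrN ler_norm.
case: (eqVneq a i) => [->|ai]; case: (eqVneq b i) => [->|bi].
- by lra.
- by have := d_small b; have := ler_norm (y i - y b); lra.
- by have := d_small a; have := ler_norm (y a - y i); rewrite distrC; lra.
- by have := spread a b; lra.
Qed.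

Lemma extremeA_partner y i : (1 < n)%N -> voronoiA y -> extremeA y ->
  exists j, `|y i - y j| = 1.
Proof.
move=> n_gt1 vor_y ext_y; apply/exists_eqP/negbNE/negP; rewrite negb_exists.
move=> /forallP no_partner.
pose gap j := 1 - `|y i - y j|.
have gap_gt0 j : 0 < gap j.
  by rewrite subr_gt0 lt_neqAle no_partner voronoiA_dist.
case: (@arg_minP _ R _ i predT gap) => // j0 _ j0_min.
pose d := gap j0.
have d_small j : `|d| <= 1 - `|y i - y j|.
  by rewrite gtr0_norm ?gap_gt0 //; apply: (j0_min j isT).
have d_small' j : `|- d| <= 1 - `|y i - y j| by rewrite normrN.
have n_pos : 0 < n%:R :> R by rewrite ltr0n ltnW.
have d_lt : d / n%:R < d by rewrite ltr_pdivrMr // ltr_pMr ?gap_gt0 // ltr1n.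
have half : 0 < (1/2 : R) < 1 by apply/andP; split; lra.
have mid k : y k = 1/2 * perturb y i d k + (1 - 1/2) * perturb y i (- d) k.
  by rewrite /perturb; case: (k == i); field; rewrite gt_eqF.
have := ext_y _ _ _ (voronoiA_perturb vor_y d_small) (voronoiA_perturb vor_y d_small') half mid i.
by rewrite /perturb eqxx; lra.
Qed.

Lemma extremeA_two_valued y : (1 < n)%N -> voronoiA y -> extremeA y ->
  exists m, [/\ forall k, y k = m \/ y k = m - 1,
                 exists p, y p = m & exists q, y q = m - 1].
Proof.
move=> n_gt1 vor_y ext_y; have spread := proj2 vor_y.
have partner k : exists l, y k - y l = 1 \/ y k - y l = -1.
  have [l /eqP] := extremeA_partner k n_gt1 vor_y ext_y.
  by rewrite eqr_norml ler01 andbT => /orP[/eqP|/eqP]; exists l; [left|right].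
have [p [q pq]] : exists p q, y p - y q = 1.
  pose i0 : 'I_n := Ordinal (ltnW n_gt1).
  by have [l [h|h]] := partner i0; [exists i0, l | exists l, i0; lra].
exists (y p); split=> [k||]; [|by exists p|by exists q; lra].
have [l [kl|kl]] := partner k.
  by left; have := spread k q; have := spread p l; lra.
by right; have := spread p k; have := spread l q; lra.
Qed.
End RootLatticeA.

Section ZeroSumExtension.
Variables (V : zmodType) (g : nat).
Implicit Types (x : 'cV[V]_g) (u : 'I_g.+1 -> V).

Definition zsum_ext x (k : 'I_g.+1) : V :=
  if unlift ord_max k is Some j then x j 0 else - \sum_j x j 0.

Definition zsum_restr u : 'cV[V]_g := \col_j u (lift ord_max j).

Lemma zsum_restrE u j : zsum_restr u j 0 = u (lift ord_max j).
Proof. by rewrite mxE. Qed.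

Lemma zsum_ext_lift x j : zsum_ext x (lift ord_max j) = x j 0.
Proof. by rewrite /zsum_ext liftK. Qed.

Lemma zsum_ext_max x : zsum_ext x ord_max = - \sum_j x j 0.
Proof. by rewrite /zsum_ext unlift_none. Qed.

Lemma sum_zsum_ext x : \sum_k zsum_ext x k = 0.
Proof.
rewrite (bigD1_ord ord_max) //= zsum_ext_max.
by under eq_bigr do rewrite zsum_ext_lift; rewrite addNr.
Qed.

Lemma zsum_restrK u : \sum_k u k = 0 -> zsum_ext (zsum_restr u) =1 u.
Proof.
rewrite (bigD1_ord ord_max) //= => /eqP; rewrite addr_eq0 => /eqP u_max k.
case: (unliftP ord_max k) => [j ->|->]; first by rewrite zsum_ext_lift; apply: zsum_restrE.
rewrite zsum_ext_max u_max; congr (- _).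
by apply: eq_bigr => j _; rewrite zsum_restrE.
Qed.

Lemma zsum_extB x x' k : zsum_ext (x - x') k = zsum_ext x k - zsum_ext x' k.
Proof.
case: (unliftP ord_max k) => [j ->|->]; first by rewrite !zsum_ext_lift !mxE.
rewrite !zsum_ext_max; under eq_bigr do rewrite !mxE.
by rewrite sumrB opprB addrC opprK.
Qed.

End ZeroSumExtension.

Lemma zsum_ext_intvec (R : realType) g (c : 'cV[int]_g) k :
  zsum_ext (intvec R c) k = (zsum_ext c k)%:~R.
Proof.
case: (unliftP ord_max k) => [j ->|->]; first by rewrite !zsum_ext_lift mxE.
rewrite !zsum_ext_max rmorphN rmorph_sum /=; congr (- _).
by apply: eq_bigr => j _; rewrite mxE.
Qed.

Lemma natr_card_set (S : semiRingType) (T : finType) (P : pred T) :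
  #|[set x | P x]|%:R = \sum_x (P x)%:R :> S.
Proof.
rewrite -sum1dep_card natr_sum big_mkcond /=.
by apply: eq_bigr => x _; case: (P x).
Qed.

Lemma card_set_ord_max n (P : pred 'I_n.+1) :
  #|[set k | P k]| = (#|[set i : 'I_n | P (lift ord_max i)]| + P ord_max)%N.
Proof.
rewrite -!sum1dep_card big_mkcond (bigD1_ord ord_max) //= addnC.
by case: (P ord_max); rewrite [in RHS]big_mkcond.
Qed.

Section BananaForm.
Variables (R : realType) (g : nat).

Lemma qform_banana_sum (x : 'cV[R]_g) :
  qform (Qbanana R g) x = \sum_i x i 0 ^+ 2 + (\sum_i x i 0) ^+ 2.
Proof.
have row j : (x^T *m Qbanana R g) 0 j = x j 0 + \sum_i x i 0.
  rewrite mxE (eq_bigr (fun i => x i 0 + (if i == j then x i 0 else 0))).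
    by rewrite big_split /= -big_mkcond big_pred1_eq addrC.
  by move=> i _; rewrite !mxE; case: (i == j); ring.
rewrite /qform mxE; under eq_bigr do rewrite row mulrDl.
by rewrite big_split /= -mulr_sumr !expr2.
Qed.

Lemma qform_banana (x : 'cV[R]_g) :
  qform (Qbanana R g) x = \sum_k zsum_ext x k ^+ 2.
Proof.
rewrite qform_banana_sum (bigD1_ord ord_max) //= zsum_ext_max sqrrN addrC.
by under [in RHS]eq_bigr do rewrite zsum_ext_lift.
Qed.

Lemma voronoi_bananaP (a : 'cV[R]_g) :
  voronoi (Qbanana R g) a <-> voronoiA (zsum_ext a).
Proof.
have dist c : qform (Qbanana R g) (a - intvec R c) =
              \sum_k (zsum_ext a k - (zsum_ext c k)%:~R) ^+ 2.
  by rewrite qform_banana; apply: eq_bigr => k _; rewrite zsum_extB zsum_ext_intvec.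
split=> [vor_a|[_ spread] c]; last first.
  by rewrite dist qform_banana; apply: spread_voronoiA_nearest => //; exact: sum_zsum_ext.
split; first exact: sum_zsum_ext.
apply: nearest_voronoiA_spread => z sum_z.
rewrite -qform_banana [X in _ <= X](eq_bigr (fun k =>
  (zsum_ext a k - (zsum_ext (zsum_restr z) k)%:~R) ^+ 2)) => [|k _].
  by rewrite -dist.
by rewrite zsum_restrK.
Qed.

Lemma voronoi_banana_restr (u : 'I_g.+1 -> R) :
  voronoiA u -> voronoi (Qbanana R g) (zsum_restr u).
Proof.
move=> [sum_u spread]; apply/voronoi_bananaP; split; first exact: sum_zsum_ext.
by move=> i j; rewrite !zsum_restrK.
Qed.

Lemma vertex_banana_extremeA (a : 'cV[R]_g) : is_vertex (Qbanana R g) a ->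
  voronoiA (zsum_ext a) /\ extremeA (zsum_ext a).
Proof.
move=> [vor_a ext_a]; split=> [|u v t vor_u vor_v t01 a_mid k]; first exact/voronoi_bananaP.
have uK := zsum_restrK (proj1 vor_u); have vK := zsum_restrK (proj1 vor_v).
suff uv : zsum_restr u = zsum_restr v by rewrite -uK uv vK.
apply: ext_a (voronoi_banana_restr vor_u) (voronoi_banana_restr vor_v) t01 _.
apply/matrixP => i j; rewrite (ord1 j) !mxE.
by rewrite -zsum_ext_lift a_mid.
Qed.

Fact natr_g1_neq0 : g%:R + 1 != 0 :> R.
Proof. by rewrite natr1 pnatr_eq0. Qed.
Hint Resolve natr_g1_neq0 : core.

Lemma two_valued_bracket (a : 'cV[R]_g) (m : R) :
  (forall k, zsum_ext a k = m \/ zsum_ext a k = m - 1) ->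
  bracket #|[set k | zsum_ext a k == m]| a.
Proof.
move=> two; set K := #|_|.
have m1_neq : (m - 1 == m) = false by apply/eqP; lra.
have K_eq : K%:R = (1 - m) * (g + 1)%:R.
  have := sum_zsum_ext a.
  rewrite (eq_bigr (fun k => (m - 1) + (zsum_ext a k == m)%:R)) => [|k _]; last first.
    by case: (two k) => ->; rewrite ?eqxx ?m1_neq ?addr0 // subrK.
  rewrite big_split /= sumr_const card_ord -natr_card_set -/K -mulr_natr addn1.
  by lra.
have hi : ((g + 1)%:R - K%:R) / (g + 1)%:R = m by rewrite K_eq; field.
have lo : - (K%:R / (g + 1)%:R) = m - 1 by rewrite K_eq; field.
rewrite /bracket hi lo; split=> [i|].
  by rewrite -zsum_ext_lift; case: (two (lift ord_max i)) => ->; [right|left].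
have -> : [set i : 'I_g | a i 0 == m] = [set i | zsum_ext a (lift ord_max i) == m].
  by apply/setP => i; rewrite !inE zsum_ext_lift.
rewrite /K card_set_ord_max.
by case: (zsum_ext a ord_max == m); [right|left]; rewrite ?addn1 ?addn0.
Qed.

Lemma vertex_banana_bracket (a : 'cV[R]_g) : (0 < g)%N ->
  is_vertex (Qbanana R g) a -> exists2 k, (1 <= k <= g)%N & bracket k a.
Proof.
move=> g_gt0 /vertex_banana_extremeA[vor_a ext_a].
have [m [two [p yp] [q yq]]] := extremeA_two_valued (g_gt0 : (1 < g.+1)%N) vor_a ext_a.
exists #|[set k | zsum_ext a k == m]|; last exact: two_valued_bracket.
apply/andP; split; first by apply/card_gt0P; exists p; rewrite inE yp.
have sub : [set k | zsum_ext a k == m] \subset [set~ q].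
  by apply/subsetP => k; rewrite !inE; apply: contraTneq => ->; rewrite yq; apply/eqP; lra.
by have := subset_leq_card sub; rewrite cardsC1 card_ord.
Qed.

Lemma bracket_coord k (a : 'cV[R]_g) i : bracket k a ->
  a i 0 = (a i 0 == 1 - k%:R / (g + 1)%:R)%:R - k%:R / (g + 1)%:R.
Proof.
rewrite /bracket (_ : ((g + 1)%:R - k%:R) / (g + 1)%:R = 1 - k%:R / (g + 1)%:R).
  case=> /(_ i) [->|->] _; last by rewrite eqxx.
  by rewrite (_ : (_ == _) = false) ?sub0r //; apply/eqP; lra.
by field.
Qed.

Lemma bracket_shift_eq k k' (a : 'cV[R]_g) (c : 'cV[int]_g) : (0 < g)%N ->
  (k <= g)%N -> (k' <= g)%N -> bracket k a -> bracket k' (a - intvec R c) -> k = k'.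
Proof.
move=> g_gt0 k_le k'_le br br'; pose i0 := Ordinal g_gt0.
have := bracket_coord i0 br'; rewrite !mxE /= {1}(bracket_coord i0 br).
set b := (a i0 0 == _); set b' := (_ == _) => coord.
have : (k%:Z - k'%:Z)%:~R = ((g + 1)%:Z * (b%:Z - b'%:Z - c i0 0))%:~R :> R.
  rewrite !(rmorphB, rmorphM) /= -!pmulrn.
  have -> : b%:R = b'%:R - k'%:R / (g + 1)%:R + k%:R / (g + 1)%:R + (c i0 0)%:~R :> R.
    by lra.
  by field.
move/intr_inj; set r := (_ - _ - _)%R => kk'.
have : (1 <= r)%R \/ r = 0 \/ (r <= -1)%R by lia.
by case=> [|[|]]; nia.
Qed.

Lemma bracket_diff_int k (a a' : 'cV[R]_g) : bracket k a -> bracket k a' ->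
  exists c, a' = a - intvec R c.
Proof.
move=> br br'; set hi : R := 1 - k%:R / (g + 1)%:R.
exists (\col_i ((a i 0 == hi)%:Z - (a' i 0 == hi)%:Z)).
apply/matrixP => i j; rewrite (ord1 j) !mxE /= rmorphB /= -!pmulrn.
by rewrite {1}(bracket_coord i br) {1}(bracket_coord i br'); lra.
Qed.
End BananaForm.

Unset Implicit Arguments.

Theorem proposition3p2 (R : realType) (g : nat) (hg : (1 <= g)%N)
    (a a' : 'cV[R]_g) :
  is_vertex (Qbanana R g) a -> is_vertex (Qbanana R g) a' ->
  (vsim (Qbanana R g) a a' <->
   exists k : nat, [/\ (1 <= k <= g)%N, bracket k a & bracket k a']).
Proof.
move=> vert_a vert_a'; split=> [[c [_ a'E]]|[k [_ br br']]].
  have [k /andP[k_ge1 k_le] br] := vertex_banana_bracket hg vert_a.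
  have [k' /andP[_ k'_le] br'] := vertex_banana_bracket hg vert_a'.
  rewrite a'E in br'; have kk' := bracket_shift_eq hg k_le k'_le br br'.
  by exists k; split; [rewrite k_ge1 k_le | | rewrite a'E kk'].
have [c a'E] := bracket_diff_int br br'.
exists c; split=> //; apply: voronoi_in_D; first exact: vert_a.1.
by rewrite -a'E; exact: vert_a'.1.
Qed.
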